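(* Let $k$ be an algebraically closed field of characteristic zero, $n\ge1$, $q\in k$ a primitive $2n$-th root of unity, $a\in k$, and let $H_{4n}$ be the Hopf algebra generated by $z,x$ with relations $z^{2n}=1$, $zx=qxz$, $x^2=0$ and $\Delta(z)=z\otimes z+a(1-q^{-2})z^{n+1}x\otimes zx$, $\Delta(x)=x\otimes 1+z^n\otimes x$, $\epsilon(z)=1$, $\epsilon(x)=0$, $S(z)=z^{-1}$, $S(x)=-z^nx$. For integers $j$ let $E_j=\frac{1}{2n}\sum_{i=0}^{2n-1}q^{-ij}z^i$. Then $H_{4n}$ is a quasi-triangular Hopf algebra with universal $R$-matrix $$R=\sum_{i,j=0}^{2n-1}(-1)^{ij}E_i\otimes E_j+2a\sum_{i,j=0}^{2n-1}(-1)^{i(j+1)}E_ix\otimes E_jx.$$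
   Context: A pair $(H,R)$ with $H$ a finite-dimensional Hopf algebra and $R\in H\otimes H$ invertible is quasi-triangular (with universal $R$-matrix $R$) if $\Delta^{op}(h)=R\Delta(h)R^{-1}$ for all $h\in H$, $(\Delta\otimes \mathrm{id})(R)=R_{13}R_{23}$ and $(\mathrm{id}\otimes\Delta)(R)=R_{13}R_{12}$, where $\Delta^{op}=\tau\circ\Delta$ with $\tau$ the flip, $R_{12}=R\otimes 1$, $R_{23}=1\otimes R$, $R_{13}=(\tau\otimes\mathrm{id})(R_{23})$. *)

(* The Hopf algebra H_{4n} is modelled concretely by its
   PBW basis { z^i x^j : 0 <= i < 2n, j in {0,1} } with structure constants;
   H, H(x)H, H(x)H(x)H are the coefficient spaces over B, B*B, B*B*B. *)
From HB Require Import structures.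
From mathcomp Require Import all_boot all_order all_algebra.
Set Implicit Arguments. Unset Strict Implicit. Unset Printing Implicit Defensive.
Import Order.TTheory GRing.Theory Num.Theory.
Local Open Scope ring_scope.

Section H4n.
Variables (k : fieldType) (n : nat) (q a : k).

(* basis index (i, j) stands for z^i x^j *)
Local Notation B := ('I_(2 * n) * bool)%type.
Local Notation H := {ffun B -> k}.
Local Notation H2 := {ffun B * B -> k}.
Local Notation H3 := {ffun B * B * B -> k}.

Definition scl (T : finType) (c : k) (u : {ffun T -> k}) : {ffun T -> k} :=
  [ffun p => c * u p].
Local Notation "c *: u" := (scl c u) : ring_scope.

(* coefficient of z^m x^t in (z^i x^j)(z^l x^s), using x^2 = 0,
   z^{2n} = 1 and x z = q^{-1} z x *)
Definition cst (b1 b2 b : B) : k :=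
  if b1.2 && b2.2 then 0
  else if ((b.1 : nat) == (b1.1 + b2.1) %% (2 * n))%N && (b.2 == b1.2 || b2.2)
       then q^-1 ^+ (nat_of_bool b1.2 * b2.1)%N else 0.

Definition mulH (h g : H) : H :=
  [ffun b => \sum_(b1 : B) \sum_(b2 : B) h b1 * g b2 * cst b1 b2 b].
Definition mul2 (u v : H2) : H2 :=
  [ffun p => \sum_(p1 : B * B) \sum_(p2 : B * B)
     u p1 * v p2 * (cst p1.1 p2.1 p.1 * cst p1.2 p2.2 p.2)].
Definition mul3 (u v : H3) : H3 :=
  [ffun p => \sum_(p1 : B * B * B) \sum_(p2 : B * B * B)
     u p1 * v p2 * (cst p1.1.1 p2.1.1 p.1.1 * cst p1.1.2 p2.1.2 p.1.2
                    * cst p1.2 p2.2 p.2)].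

Definition zpow (i : nat) : H :=
  [ffun b : B => if ((b.1 : nat) == i %% (2 * n))%N && ~~ b.2 then 1 else 0].
Definition xH : H := [ffun b : B => if ((b.1 : nat) == 0)%N && b.2 then 1 else 0].
Definition oneH : H := zpow 0.
Definition ebas (b : B) : H := [ffun b' => (b' == b)%:R].

Definition tens (h g : H) : H2 := [ffun p => h p.1 * g p.2].
Definition tens3l (u : H2) (h : H) : H3 := [ffun p => u p.1 * h p.2].
Definition tens3r (h : H) (u : H2) : H3 := [ffun p => h p.1.1 * u (p.1.2, p.2)].
Definition one2 : H2 := tens oneH oneH.
Definition pow2 (u : H2) (m : nat) : H2 := iter m (mul2 u) one2.

Definition Dz : H2 :=
  tens (zpow 1) (zpow 1)
  + (a * (1 - q^-2)) *: tens (mulH (zpow (n + 1)) xH) (mulH (zpow 1) xH).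
Definition Dx : H2 := tens xH oneH + tens (zpow n) xH.
Definition Deltab (b : B) : H2 := mul2 (pow2 Dz b.1) (pow2 Dx b.2).
Definition Delta (h : H) : H2 := \sum_(b : B) h b *: Deltab b.
Definition flip2 (u : H2) : H2 := [ffun p => u (p.2, p.1)].
Definition Delta_op (h : H) : H2 := flip2 (Delta h).

Definition DeltaId (u : H2) : H3 :=
  \sum_(p : B * B) u p *: tens3l (Deltab p.1) (ebas p.2).
Definition IdDelta (u : H2) : H3 :=
  \sum_(p : B * B) u p *: tens3r (ebas p.1) (Deltab p.2).

Definition R12 (u : H2) : H3 := tens3l u oneH.
Definition R23 (u : H2) : H3 := tens3r oneH u.
Definition R13 (u : H2) : H3 := [ffun p => u (p.1.1, p.2) * oneH p.1.2].

Definition E (j : nat) : H :=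
  (2 * n)%:R^-1 *: \sum_(i < 2 * n) q^-1 ^+ (i * j) *: zpow i.
Definition Rmat : H2 :=
  \sum_(i < 2 * n) \sum_(j < 2 * n) (-1) ^+ (i * j) *: tens (E i) (E j)
  + (2 * a) *: \sum_(i < 2 * n) \sum_(j < 2 * n)
       (-1) ^+ (i * (j + 1)) *: tens (mulH (E i) xH) (mulH (E j) xH).

Definition quasi_triangular (R : H2) : Prop :=
  (exists Rinv : H2, mul2 R Rinv = one2 /\ mul2 Rinv R = one2 /\
     forall h : H, Delta_op h = mul2 (mul2 R (Delta h)) Rinv)
  /\ DeltaId R = mul3 (R13 R) (R23 R)
  /\ IdDelta R = mul3 (R13 R) (R12 R).

End H4n.

From HB Require Import structures.
From mathcomp Require Import all_boot all_order all_algebra.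
From mathcomp Require Import ring zify.
Set Implicit Arguments. Unset Strict Implicit. Unset Printing Implicit Defensive.
Import Order.TTheory GRing.Theory Num.Theory.
Local Open Scope ring_scope.

(* Let g = z^n, so that g^2 = 1, x g = - g x and q^n = -1.  Writing
   (-1)^(ij) = (1 + (-1)^i + (-1)^j - (-1)^(i+j)) / 2 and using the Fourier
   identities sum_i E_i = 1 and sum_i (-1)^i E_i = g, the R-matrix collapses to
     R = (1⊗1 + g⊗1 + 1⊗g - g⊗g) / 2 + a (x⊗x - x⊗gx + gx⊗x + gx⊗gx),
   whose inverse is obtained by changing the signs of x⊗gx and gx⊗x.  Since
   flip ∘ Δ and X |-> R X R^-1 are both algebra maps, Δ^op = R Δ R^-1 only has
   to be checked on z and x.  The hexagon identities only involve Δ on 1, g,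
   x and gx, which are read off from
     Δ(z)^i = z^i ⊗ z^i + a (1 - q^(-2i)) z^i g x ⊗ z^i x.
   What remains are finitely many identities in the monomial basis z^i x^t. *)

Section Coordinates.
Variables (k : fieldType) (T : finType).
Implicit Types (c d : k) (u v : {ffun T -> k}).

Lemma scl0r u : scl 0 u = 0.
Proof. by apply/ffunP => p; rewrite !ffunE mul0r. Qed.

Lemma scl1r u : scl 1 u = u.
Proof. by apply/ffunP => p; rewrite !ffunE mul1r. Qed.

Lemma sclrA c d u : scl c (scl d u) = scl (c * d) u.
Proof. by apply/ffunP => p; rewrite !ffunE mulrA. Qed.

Lemma sum_delta_l (b0 : T) (F : T -> k) : \sum_b (b == b0)%:R * F b = F b0.
Proof.
rewrite (bigD1 b0) //= eqxx mul1r big1 ?addr0 // => b /negbTE ->.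
by rewrite mul0r.
Qed.

Lemma sum_delta_r (b0 : T) (F : T -> k) : \sum_b F b * (b == b0)%:R = F b0.
Proof. by rewrite -[RHS](sum_delta_l b0); apply: eq_bigr => b _; rewrite mulrC. Qed.

End Coordinates.

Section StructureConstants.
Variables (k : fieldType) (T : finType) (c : T -> T -> T -> k).
Implicit Types u v w : {ffun T -> k}.

Definition mul_sc u v : {ffun T -> k} :=
  [ffun p => \sum_p1 \sum_p2 u p1 * v p2 * c p1 p2 p].

Lemma mul_scDl u v w : mul_sc (u + v) w = mul_sc u w + mul_sc v w.
Proof.
apply/ffunP => p; rewrite !ffunE -big_split; apply: eq_bigr => p1 _.
by rewrite -big_split; apply: eq_bigr => p2 _; rewrite !ffunE !mulrDl.
Qed.

Lemma mul_scDr u v w : mul_sc u (v + w) = mul_sc u v + mul_sc u w.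
Proof.
apply/ffunP => p; rewrite !ffunE -big_split; apply: eq_bigr => p1 _.
by rewrite -big_split; apply: eq_bigr => p2 _; rewrite !ffunE mulrDr mulrDl.
Qed.

Lemma mul_scZl d u w : mul_sc (scl d u) w = scl d (mul_sc u w).
Proof.
apply/ffunP => p; rewrite !ffunE mulr_sumr; apply: eq_bigr => p1 _.
by rewrite mulr_sumr; apply: eq_bigr => p2 _; rewrite !ffunE; ring.
Qed.

Lemma mul_scZr d u w : mul_sc u (scl d w) = scl d (mul_sc u w).
Proof.
apply/ffunP => p; rewrite !ffunE mulr_sumr; apply: eq_bigr => p1 _.
by rewrite mulr_sumr; apply: eq_bigr => p2 _; rewrite !ffunE; ring.
Qed.

Lemma mul_sc0l w : mul_sc 0 w = 0.
Proof. by rewrite -[0 in LHS](scl0r 0) mul_scZl scl0r. Qed.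

Lemma mul_sc0r w : mul_sc w 0 = 0.
Proof. by rewrite -[0 in LHS](scl0r 0) mul_scZr scl0r. Qed.

Lemma mul_sc_suml I (r : seq I) (P : pred I) (F : I -> {ffun T -> k}) w :
  mul_sc (\sum_(i <- r | P i) F i) w = \sum_(i <- r | P i) mul_sc (F i) w.
Proof. by elim/big_rec2: _ => [|i x y _ <-]; rewrite ?mul_sc0l ?mul_scDl. Qed.

Lemma mul_sc_sumr I (r : seq I) (P : pred I) (F : I -> {ffun T -> k}) w :
  mul_sc w (\sum_(i <- r | P i) F i) = \sum_(i <- r | P i) mul_sc w (F i).
Proof. by elim/big_rec2: _ => [|i x y _ <-]; rewrite ?mul_sc0r ?mul_scDr. Qed.

Definition sc_assoc := forall p1 p2 p3 p,
  \sum_m c p1 p2 m * c m p3 p = \sum_m c p2 p3 m * c p1 m p.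

Lemma mul_sc_mul_scl u v w p : mul_sc (mul_sc u v) w p =
  \sum_p1 \sum_p2 \sum_p3 u p1 * v p2 * w p3 * \sum_m c p1 p2 m * c m p3 p.
Proof.
transitivity (\sum_m \sum_p3 \sum_p1 \sum_p2
                u p1 * v p2 * w p3 * (c p1 p2 m * c m p3 p)).
  rewrite ffunE; apply: eq_bigr => m _; apply: eq_bigr => p3 _.
  rewrite ffunE !mulr_suml; apply: eq_bigr => p1 _.
  by rewrite !mulr_suml; apply: eq_bigr => p2 _; ring.
rewrite exchange_big; under eq_bigr => p3 _ do rewrite exchange_big.
rewrite exchange_big; apply: eq_bigr => p1 _.
under eq_bigr => p3 _ do rewrite exchange_big.
rewrite exchange_big; apply: eq_bigr => p2 _; apply: eq_bigr => p3 _.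
by rewrite mulr_sumr.
Qed.

Lemma mul_sc_mul_scr u v w p : mul_sc u (mul_sc v w) p =
  \sum_p1 \sum_p2 \sum_p3 u p1 * v p2 * w p3 * \sum_m c p2 p3 m * c p1 m p.
Proof.
rewrite ffunE; apply: eq_bigr => p1 _.
transitivity (\sum_m \sum_p2 \sum_p3 u p1 * v p2 * w p3 * (c p2 p3 m * c p1 m p)).
  apply: eq_bigr => m _; rewrite ffunE mulr_sumr mulr_suml; apply: eq_bigr => p2 _.
  by rewrite mulr_sumr mulr_suml; apply: eq_bigr => p3 _; ring.
rewrite exchange_big; apply: eq_bigr => p2 _.
rewrite exchange_big; apply: eq_bigr => p3 _.
by rewrite mulr_sumr.
Qed.

Lemma mul_scA : sc_assoc -> associative mul_sc.
Proof.
move=> cA u v w; apply/ffunP => p; rewrite mul_sc_mul_scl mul_sc_mul_scr.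
by do 3![apply: eq_bigr => ? _]; rewrite cA.
Qed.

Definition delta_vec (e : T) : {ffun T -> k} := [ffun b => (b == e)%:R].

Lemma mul_sc_delta b1 b2 :
  mul_sc (delta_vec b1) (delta_vec b2) = [ffun b => c b1 b2 b].
Proof.
apply/ffunP => b; rewrite !ffunE.
under eq_bigr => p1 _ do under eq_bigr => p2 _ do rewrite !ffunE -mulrA.
by under eq_bigr => p1 _ do rewrite -mulr_sumr sum_delta_l; rewrite sum_delta_l.
Qed.

Definition sc_unit e := forall b b', c e b b' = (b' == b)%:R /\ c b e b' = (b' == b)%:R.

Lemma mul_sc1r e : sc_unit e -> forall u, mul_sc u (delta_vec e) = u.
Proof.
move=> cu u; apply/ffunP => p; rewrite ffunE -[RHS](sum_delta_l p).
apply: eq_bigr => p1 _; under eq_bigr => p2 _ do rewrite ffunE -mulrA mulrCA.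
by rewrite sum_delta_l (cu _ _).2 eq_sym mulrC.
Qed.

End StructureConstants.

Section TensorProduct.
Variables (k : fieldType) (T1 T2 : finType).
Variables (c1 : T1 -> T1 -> T1 -> k) (c2 : T2 -> T2 -> T2 -> k).

Definition sc_tensor (p1 p2 p : T1 * T2) : k := c1 p1.1 p2.1 p.1 * c2 p1.2 p2.2 p.2.

Definition tensf (h : {ffun T1 -> k}) (g : {ffun T2 -> k}) : {ffun T1 * T2 -> k} :=
  [ffun p => h p.1 * g p.2].

Lemma sum_pair (F : T1 * T2 -> k) : \sum_p F p = \sum_b1 \sum_b2 F (b1, b2).
Proof. by rewrite pair_big; apply: eq_bigr => -[]. Qed.

Lemma sc_tensor_assoc : sc_assoc c1 -> sc_assoc c2 -> sc_assoc sc_tensor.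
Proof.
move=> c1A c2A p1 p2 p3 p; rewrite /sc_tensor !sum_pair /=.
transitivity ((\sum_m1 c1 p1.1 p2.1 m1 * c1 m1 p3.1 p.1) *
              (\sum_m2 c2 p1.2 p2.2 m2 * c2 m2 p3.2 p.2)).
  rewrite mulr_suml; apply: eq_bigr => m1 _; rewrite mulr_sumr.
  by apply: eq_bigr => m2 _; ring.
rewrite c1A c2A mulr_suml; apply: eq_bigr => m1 _; rewrite mulr_sumr.
by apply: eq_bigr => m2 _; ring.
Qed.

Lemma sc_tensor_unit e1 e2 :
  sc_unit c1 e1 -> sc_unit c2 e2 -> sc_unit sc_tensor (e1, e2).
Proof.
move=> u1 u2 [b1 b2] [b1' b2']; rewrite /sc_tensor /= (u1 _ _).1 (u1 _ _).2.
by rewrite (u2 _ _).1 (u2 _ _).2 xpair_eqE; case: (_ == _); case: (_ == _);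
  rewrite /= ?mulr1 ?mulr0.
Qed.

Lemma tensf_delta e1 e2 : tensf (delta_vec k e1) (delta_vec k e2) = delta_vec k (e1, e2).
Proof.
apply/ffunP => -[b1 b2]; rewrite !ffunE xpair_eqE.
by case: (_ == _); rewrite ?mul1r ?mul0r.
Qed.

Lemma tensfZ c d h g : tensf (scl c h) (scl d g) = scl (c * d) (tensf h g).
Proof. by apply/ffunP => p; rewrite !ffunE; ring. Qed.

Lemma mul_sc_tensf h h' g g' :
  mul_sc sc_tensor (tensf h g) (tensf h' g') = tensf (mul_sc c1 h h') (mul_sc c2 g g').
Proof.
apply/ffunP => p; rewrite !ffunE sum_pair.
under eq_bigr => b1 _ do under eq_bigr => b2 _ do rewrite sum_pair.
under eq_bigr => b1 _ do rewrite exchange_big.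
rewrite mulr_suml; apply: eq_bigr => b1 _; rewrite mulr_suml; apply: eq_bigr => b1' _.
rewrite mulr_sumr; apply: eq_bigr => b2 _; rewrite mulr_sumr; apply: eq_bigr => b2' _.
by rewrite !ffunE /sc_tensor /=; ring.
Qed.

End TensorProduct.

Section Monomials.
Variables (k : fieldType) (T : finType) (M : Type).
Implicit Types (vec : M -> {ffun T -> k}) (mmul : M -> M -> k * M).

Definition mul_rule (c : T -> T -> T -> k) vec mmul := forall m m',
  mul_sc c (vec m) (vec m') = scl (mmul m m').1 (vec (mmul m m').2).

Definition comb vec (L : seq (k * M)) : {ffun T -> k} := \sum_(i <- L) scl i.1 (vec i.2).

Definition comb_mul mmul (L1 L2 : seq (k * M)) : seq (k * M) :=
  [seq (i.1 * j.1 * (mmul i.2 j.2).1, (mmul i.2 j.2).2) | i <- L1, j <- L2].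

Lemma combE vec L p : comb vec L p = \sum_(i <- L) i.1 * vec i.2 p.
Proof. by rewrite sum_ffunE; apply: eq_bigr => i _; rewrite ffunE. Qed.

Lemma mul_sc_comb c vec mmul : mul_rule c vec mmul ->
  forall L1 L2, mul_sc c (comb vec L1) (comb vec L2) = comb vec (comb_mul mmul L1 L2).
Proof.
move=> cvec L1 L2; rewrite /comb big_allpairs_dep mul_sc_suml; apply: eq_bigr => i _.
rewrite mul_sc_sumr; apply: eq_bigr => j _.
by rewrite mul_scZl mul_scZr cvec !sclrA mulrAC.
Qed.

End Monomials.

Section MonomialPairs.
Variables (k : fieldType) (T1 T2 : finType) (M1 M2 : Type).
Variables (vec1 : M1 -> {ffun T1 -> k}) (vec2 : M2 -> {ffun T2 -> k}).
Variables (mmul1 : M1 -> M1 -> k * M1) (mmul2 : M2 -> M2 -> k * M2).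

Definition vec_pair (m : M1 * M2) : {ffun T1 * T2 -> k} := tensf (vec1 m.1) (vec2 m.2).

Definition mmul_pair (m m' : M1 * M2) : k * (M1 * M2) :=
  ((mmul1 m.1 m'.1).1 * (mmul2 m.2 m'.2).1, ((mmul1 m.1 m'.1).2, (mmul2 m.2 m'.2).2)).

Lemma mul_rule_pair c1 c2 : mul_rule c1 vec1 mmul1 -> mul_rule c2 vec2 mmul2 ->
  mul_rule (sc_tensor c1 c2) vec_pair mmul_pair.
Proof. by move=> r1 r2 m m'; rewrite mul_sc_tensf r1 r2 tensfZ. Qed.

End MonomialPairs.

Lemma sum_expr_unity (R : idomainType) (m : nat) (w : R) :
  w ^+ m = 1 -> \sum_(i < m) w ^+ i = (w == 1)%:R * m%:R.
Proof.
move=> wm; have [->|w1] := eqVneq w 1.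
  by rewrite mul1r (eq_bigr (fun=> 1)) ?sumr_const ?card_ord // => i _; rewrite expr1n.
rewrite mul0r; have := subrX1 w m; rewrite wm subrr => /esym/eqP.
by rewrite mulf_eq0 subr_eq0 (negbTE w1) => /eqP.
Qed.

Section SignSplit.
Variables (R : fieldType) (m : nat).
Hypothesis two_neq0 : (2 : R) != 0.
Implicit Types e f : 'I_m -> R.

Local Notation S e := (\sum_(i < m) e i).
Local Notation Ssign e := (\sum_(i < m) (-1) ^+ i * e i).

Lemma sign_split (i j : nat) :
  (-1) ^+ (i * j) = 2^-1 * (1 + (-1) ^+ i + (-1) ^+ j - (-1) ^+ i * (-1) ^+ j) :> R.
Proof.
rewrite -signr_odd oddM -[(-1) ^+ i]signr_odd -[(-1) ^+ j]signr_odd.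
by case: (odd i); case: (odd j); rewrite /= ?expr0 ?expr1; field.
Qed.

Lemma sum_sign_split e f :
  \sum_(i < m) \sum_(j < m) (-1) ^+ (i * j) * (e i * f j) =
  2^-1 * (S e * S f + Ssign e * S f + S e * Ssign f - Ssign e * Ssign f).
Proof.
rewrite !big_distrlr -!big_split -sumrB mulr_sumr; apply: eq_bigr => i _.
rewrite -!big_split -sumrB mulr_sumr; apply: eq_bigr => j _ /=.
by rewrite sign_split; ring.
Qed.

Lemma sum_sign_split_shift e f :
  \sum_(i < m) \sum_(j < m) (-1) ^+ (i * (j + 1)) * (e i * f j) =
  2^-1 * (Ssign e * S f + S e * S f + Ssign e * Ssign f - S e * Ssign f).
Proof.
transitivity (\sum_(i < m) \sum_(j < m)
                (-1) ^+ (i * j) * ((-1) ^+ i * e i * f j)).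
  by do 2![apply: eq_bigr => ? _]; rewrite mulnDr muln1 exprD; ring.
rewrite (sum_sign_split (fun i => (-1) ^+ i * e i)).
suff -> : \sum_(i < m) (-1) ^+ i * ((-1) ^+ i * e i) = S e by [].
by apply: eq_bigr => i _; rewrite signrMK.
Qed.

End SignSplit.

Section H4n.
Variables (k : fieldType) (n : nat) (q a : k).
Hypotheses (n_gt0 : (0 < n)%N) (q_prim : (2 * n).-primitive_root q).
Hypothesis char_k0 : [pchar k] =i pred0.

Local Notation N := (2 * n)%N.
Local Notation B := ('I_N * bool)%type.
Local Notation H := {ffun B -> k}.
Local Notation H2 := {ffun B * B -> k}.
Local Notation Q := q^-1.

Lemma N_gt0 : (0 < N)%N.
Proof. by rewrite muln_gt0. Qed.

Lemma n_lt_N : (n < N)%N.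
Proof. by rewrite mul2n -addnn -{1}[n]addn0 ltn_add2l. Qed.

Lemma q_neq0 : q != 0.
Proof. by rewrite (prim_root_eq0 q_prim) muln_eq0 -lt0n n_gt0. Qed.

Lemma two_neq0 : (2 : k) != 0.
Proof. by move/pcharf0P: char_k0 => ->. Qed.

Lemma N_neq0 : (N%:R : k) != 0.
Proof. by move/pcharf0P: char_k0 => ->; rewrite -lt0n N_gt0. Qed.

Lemma QN : Q ^+ N = 1.
Proof. by rewrite exprVn (prim_expr_order q_prim) invr1. Qed.

Lemma qn : q ^+ n = -1.
Proof.
have: (q ^+ n) ^+ 2 == 1 by rewrite -exprM mulnC (prim_expr_order q_prim).
rewrite sqrf_eq1 -[X in q ^+ n == X](expr0 q) (eq_prim_root_expr q_prim).
by rewrite mod0n modn_small ?n_lt_N // eqn0Ngt n_gt0 => /eqP.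
Qed.

Lemma Qn : Q ^+ n = -1.
Proof. by rewrite exprVn qn invrN1. Qed.

Definition ord_mod (e : nat) : 'I_N := Ordinal (ltn_pmod e N_gt0).

Lemma ord_modK (i : 'I_N) : ord_mod i = i.
Proof. by apply: val_inj; rewrite /= modn_small. Qed.

Definition bmul (b1 b2 : B) : B := (ord_mod (b1.1 + b2.1)%N, b1.2 || b2.2).
Definition bcoef (b1 b2 : B) : k := if b1.2 && b2.2 then 0 else Q ^+ (b1.2 * b2.1)%N.

Lemma cstE b1 b2 b : cst q b1 b2 b = bcoef b1 b2 * (b == bmul b1 b2)%:R.
Proof.
case: b => i t; rewrite /cst /bcoef /bmul xpair_eqE -val_eqE /=.
by case: (_ && _); last case: ifP; rewrite ?mul0r ?mulr1 ?mulr0.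
Qed.

Lemma bmulA : associative bmul.
Proof.
move=> b1 b2 b3; rewrite /bmul /= orbA; congr (_, _); apply: val_inj => /=.
by rewrite modnDml modnDmr addnA.
Qed.

Lemma cst_assoc : sc_assoc (@cst k n q).
Proof.
move=> b1 b2 b3 p.
under eq_bigr => m _ do rewrite cstE mulrAC.
rewrite sum_delta_r; under eq_bigr => m _ do rewrite cstE mulrAC.
rewrite sum_delta_r !cstE bmulA !mulrA; congr (_ * _).
case: b1 b2 b3 => [i1 [] ] [i2 [] ] [i3 [] ];
  rewrite /bcoef /bmul /= ?mul1n ?mul0n ?mulr1 ?mul1r ?mul0r ?mulr0 //.
by rewrite (expr_mod _ QN) exprD.
Qed.

Lemma cst_unit : sc_unit (@cst k n q) (ord_mod 0, false).
Proof.
move=> [i t] b'; rewrite !cstE /bcoef /bmul /= andbF orbF mod0n mul0n muln0 expr0.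
by rewrite add0n addn0 ord_modK mul1r.
Qed.

(* [(i, j, t)] stands for the monomial z^i g^j x^t, where g = z^n.  As g^2 = 1
   and x g = - g x, the product of two monomials is again a monomial up to a
   sign and a power of q^-1, which [simpl] computes when j and t are known. *)
Definition mon := (nat * bool * bool)%type.

Definition zexp (m : mon) : nat := (m.1.1 + m.1.2 * n)%N.

Definition idx (m : mon) : B := (ord_mod (zexp m), m.2).

Definition mono (m : mon) : H := delta_vec k (idx m).
Arguments idx : simpl never.
Arguments mono : simpl never.

Local Notation mon1 := (0%N, false, false).
Local Notation mong := (0%N, true, false).
Local Notation monx := (0%N, false, true).
Local Notation mongx := (0%N, true, true).

Definition mono_mul (m m' : mon) : k * mon :=
  (if m.2 then (if m'.2 then 0 else Q ^+ m'.1.1 * (-1) ^+ m'.1.2) else 1,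
   ((m.1.1 + m'.1.1)%N, m.1.2 (+) m'.1.2, m.2 || m'.2)).

Lemma idx_eq m m' : zexp m = zexp m' %[mod N] -> m.2 = m'.2 -> idx m = idx m'.
Proof. by move=> em et; rewrite /idx et; congr (_, _); apply: val_inj. Qed.

Lemma bmul_idx m m' : bmul (idx m) (idx m') = idx (mono_mul m m').2.
Proof.
rewrite /bmul; congr (_, _); apply: val_inj => /=; rewrite modnDm /zexp /=.
case: m m' => [[i j] s] [[i' j'] t] /=.
case: j; case: j' => /=; rewrite ?mul1n ?mul0n ?addn0;
  first by rewrite addnACA addnn -mul2n modnDr.
all: by f_equal; lia.
Qed.

Lemma bcoef_idx m m' : bcoef (idx m) (idx m') = (mono_mul m m').1.
Proof.
case: m m' => [[i j] [] ] [[i' j'] [] ]; rewrite /bcoef /= ?mul0n ?expr0 //.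
by rewrite mul1n (expr_mod _ QN) exprD mulnC exprM Qn.
Qed.

Lemma mono_mul_rule : mul_rule (@cst k n q) mono mono_mul.
Proof.
move=> m m'; rewrite mul_sc_delta; apply/ffunP => b.
by rewrite !ffunE cstE bmul_idx bcoef_idx.
Qed.

Lemma mulHE : mulH q = mul_sc (@cst k n q).
Proof. by []. Qed.

Lemma mulH_mono m m' :
  mulH q (mono m) (mono m') = scl (mono_mul m m').1 (mono (mono_mul m m').2).
Proof. exact: mono_mul_rule. Qed.

Lemma mono_eq m m' : zexp m = zexp m' %[mod N] -> m.2 = m'.2 -> mono m = mono m'.
Proof. by move=> em et; rewrite /mono (idx_eq em et). Qed.

Lemma mono_zn t : mono (n, false, t) = mono (0, true, t).
Proof. by apply: mono_eq; rewrite // /zexp /= addn0. Qed.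

Lemma zpowE e : zpow k n e = mono (e, false, false).
Proof.
apply/ffunP => -[i t]; rewrite !ffunE xpair_eqE -val_eqE /= /zexp /= mul0n addn0.
by case: t; rewrite ?andbT ?andbF //; case: (_ == _).
Qed.

Lemma xHE : xH k n = mono (0, false, true).
Proof.
apply/ffunP => -[i t]; rewrite !ffunE xpair_eqE -val_eqE /= /zexp /= mod0n.
by case: t; rewrite ?andbT ?andbF //; case: (_ == _).
Qed.

Lemma oneHE : oneH k n = mono (0, false, false).
Proof. exact: zpowE. Qed.

Local Notation comb2 := (comb (vec_pair mono mono)).
Local Notation comb3 := (comb (vec_pair (vec_pair mono mono) mono)).
Local Notation mul2_list := (comb_mul (mmul_pair mono_mul mono_mul)).
Local Notation mul3_list := (comb_mul (mmul_pair (mmul_pair mono_mul mono_mul) mono_mul)).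

Lemma mul2E : mul2 q = mul_sc (sc_tensor (@cst k n q) (@cst k n q)).
Proof. by []. Qed.

Lemma mul2_comb L1 L2 : mul2 q (comb2 L1) (comb2 L2) = comb2 (mul2_list L1 L2).
Proof. exact: mul_sc_comb (mul_rule_pair mono_mul_rule mono_mul_rule) L1 L2. Qed.

Lemma mul3_comb L1 L2 : mul3 q (comb3 L1) (comb3 L2) = comb3 (mul3_list L1 L2).
Proof.
exact: mul_sc_comb (mul_rule_pair (mul_rule_pair mono_mul_rule mono_mul_rule)
                                  mono_mul_rule) L1 L2.
Qed.

Lemma comb2E L p : comb2 L p = \sum_(i <- L) i.1 * (mono i.2.1 p.1 * mono i.2.2 p.2).
Proof. by rewrite combE; apply: eq_bigr => i _; rewrite ffunE. Qed.

Lemma comb3E L p : comb3 L p =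
  \sum_(i <- L) i.1 * (mono i.2.1.1 p.1.1 * mono i.2.1.2 p.1.2 * mono i.2.2 p.2).
Proof. by rewrite combE; apply: eq_bigr => i _; rewrite !ffunE. Qed.

Lemma one2_delta : one2 k n = delta_vec k (idx mon1, idx mon1).
Proof. by rewrite /one2 oneHE; apply: tensf_delta. Qed.

Lemma mul2_1r u : mul2 q u (one2 k n) = u.
Proof. by rewrite one2_delta; apply: mul_sc1r (sc_tensor_unit cst_unit cst_unit) u. Qed.

Lemma mul2A : associative (mul2 q : H2 -> H2 -> H2).
Proof. exact: mul_scA (sc_tensor_assoc cst_assoc cst_assoc). Qed.

Definition one_list : seq (k * (mon * mon)) := [:: (1, (mon1, mon1))].

Definition Dzpow_list (i : nat) (j : bool) : seq (k * (mon * mon)) :=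
  [:: (1, ((i, j, false), (i, j, false)));
      (a * (1 - (Q ^+ i) ^+ 2), ((i, ~~ j, true), (i, j, true)))].

Definition Dx_list : seq (k * (mon * mon)) := [:: (1, (monx, mon1)); (1, (mong, monx))].

Definition Delta_list (m : mon) : seq (k * (mon * mon)) :=
  mul2_list (Dzpow_list m.1.1 m.1.2) (if m.2 then Dx_list else one_list).

Definition R_list : seq (k * (mon * mon)) :=
  [:: (2^-1, (mon1, mon1)); (2^-1, (mong, mon1)); (2^-1, (mon1, mong));
      (- 2^-1, (mong, mong)); (a, (monx, monx)); (- a, (monx, mongx));
      (a, (mongx, monx)); (a, (mongx, mongx))].

Definition Rinv_list : seq (k * (mon * mon)) :=
  [:: (2^-1, (mon1, mon1)); (2^-1, (mong, mon1)); (2^-1, (mon1, mong));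
      (- 2^-1, (mong, mong)); (a, (monx, monx)); (a, (monx, mongx));
      (- a, (mongx, monx)); (a, (mongx, mongx))].

(* Both sides are unfolded into explicit linear combinations of the values
   [mono m p]; [field] treats these values as independent atoms, so each
   identity is checked as a formal one. *)
Ltac coord_expand :=
  rewrite ?comb2E ?comb3E;
  unfold Delta_list, comb_mul, one_list, Dzpow_list, Dx_list, R_list, Rinv_list;
  rewrite unlock /= ?(addn0, add0n).

Ltac coord_solve :=
  field; do ?[apply/andP; split]; by [exact: q_neq0 | exact: two_neq0].

Ltac coord_field := coord_expand; coord_solve.

Lemma one2_comb : one2 k n = comb2 one_list.
Proof. by rewrite /one2 oneHE /comb big_cons big_nil scl1r addr0. Qed.

Lemma Dz_comb : Dz n q a = comb2 (Dzpow_list 1 false).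
Proof.
rewrite /Dz !zpowE xHE !mulH_mono /= !scl1r.
have -> : mono (n + 1 + 0, false, true) = mono (1, true, true).
  by apply: mono_eq; rewrite // /zexp /=; f_equal; lia.
by rewrite /comb !big_cons big_nil scl1r addr0 expr1 exprVn.
Qed.

Lemma Dx_comb : Dx k n = comb2 Dx_list.
Proof.
rewrite /Dx xHE oneHE zpowE mono_zn.
by rewrite /comb !big_cons big_nil !scl1r addr0.
Qed.

Lemma Dzpow_comb l : pow2 q (Dz n q a) l = comb2 (Dzpow_list l false).
Proof.
elim: l => [|l IHl]; apply/ffunP => p.
  by rewrite /pow2 /= one2_comb; coord_field.
rewrite /pow2 /= -/(pow2 q (Dz n q a) l) IHl Dz_comb mul2_comb.
by coord_expand; rewrite add1n [Q ^+ l.+1]exprS; coord_solve.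
Qed.

Lemma Dzpow_list_mod e i (j : bool) : e = i + j * n %[mod N] ->
  comb2 (Dzpow_list e false) = comb2 (Dzpow_list i j).
Proof.
move=> he.
have monoE t : mono (e, false, t) = mono (i, j, t).
  by apply: mono_eq; rewrite // /zexp /= addn0.
have monogE t : mono (e, true, t) = mono (i, ~~ j, t).
  apply: mono_eq; rewrite // /zexp /= mul1n -modnDml he modnDml.
  by case: (j); rewrite /= ?mul1n ?mul0n ?addn0 // -addnA addnn -mul2n modnDr.
have Q2n : (Q ^+ 2) ^+ n = 1 by rewrite -exprM QN.
have Q2N : (Q ^+ 2) ^+ N = 1 by rewrite mulnC exprM Q2n expr1n.
have coefE : (Q ^+ e) ^+ 2 = (Q ^+ i) ^+ 2.
  rewrite [LHS]exprAC [RHS]exprAC -(expr_mod e Q2N) he (expr_mod _ Q2N).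
  by rewrite exprD mulnC exprM Q2n expr1n mulr1.
by rewrite /Dzpow_list /comb !big_cons big_nil /vec_pair /= !monoE !monogE coefE.
Qed.

Lemma Deltab_idx m : Deltab q a (idx m) = comb2 (Delta_list m).
Proof.
rewrite /Deltab /idx /= Dzpow_comb (@Dzpow_list_mod _ m.1.1 m.1.2) ?modn_mod //.
rewrite /Delta_list -mul2_comb; congr (mul2 q _ _).
by case: m.2; rewrite /pow2 /= ?mul2_1r ?Dx_comb ?one2_comb.
Qed.

Local Notation R := (comb2 R_list).
Local Notation Rinv := (comb2 Rinv_list).

Lemma R_mulRinv : mul2 q R Rinv = one2 k n.
Proof. by rewrite one2_comb mul2_comb; apply/ffunP => p; coord_field. Qed.

Lemma Rinv_mulR : mul2 q Rinv R = one2 k n.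
Proof. by rewrite one2_comb mul2_comb; apply/ffunP => p; coord_field. Qed.

Definition swap_term (i : k * (mon * mon)) := (i.1, (i.2.2, i.2.1)).

Lemma flip2_comb L : flip2 (comb2 L) = comb2 (map swap_term L).
Proof.
apply/ffunP => p; rewrite ffunE !comb2E big_map.
by apply: eq_bigr => i _; rewrite /= [_ * mono _ p.1]mulrC.
Qed.

Lemma flip2_mul (u v : H2) : flip2 (mul2 q u v) = mul2 q (flip2 u) (flip2 v).
Proof.
have swap_inj : injective (fun z : B * B => (z.2, z.1)) by move=> [? ?] [? ?] [-> ->].
apply/ffunP => p; rewrite !ffunE (reindex_inj swap_inj); apply: eq_bigr => p1 _.
rewrite (reindex_inj swap_inj); apply: eq_bigr => p2 _.
by rewrite !ffunE /=; ring.
Qed.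

Lemma flip2_pow2 (u : H2) l : flip2 (pow2 q u l) = pow2 q (flip2 u) l.
Proof.
elim: l => [|l IHl]; first by rewrite /pow2 /= one2_comb flip2_comb.
by rewrite /pow2 /= flip2_mul -/(pow2 q u l) IHl.
Qed.

Lemma flip_Dz_R : mul2 q (flip2 (Dz n q a)) R = mul2 q R (Dz n q a).
Proof. by rewrite Dz_comb flip2_comb !mul2_comb; apply/ffunP => p; coord_field. Qed.

Lemma flip_Dx_R : mul2 q (flip2 (Dx k n)) R = mul2 q R (Dx k n).
Proof. by rewrite Dx_comb flip2_comb !mul2_comb; apply/ffunP => p; coord_field. Qed.

Definition conjR (u : H2) : H2 := mul2 q (mul2 q R u) Rinv.

Lemma conjR_mul (u v : H2) : conjR (mul2 q u v) = mul2 q (conjR u) (conjR v).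
Proof.
rewrite /conjR !mul2A.
by rewrite -[mul2 q (mul2 q (mul2 q R u) Rinv) R]mul2A Rinv_mulR mul2_1r.
Qed.

Lemma conjR_pow2 (u : H2) l : conjR (pow2 q u l) = pow2 q (conjR u) l.
Proof.
elim: l => [|l IHl]; first by rewrite /conjR /pow2 /= mul2_1r R_mulRinv.
by rewrite /pow2 /= conjR_mul -/(pow2 q u l) IHl.
Qed.

Lemma conjR_flip (u : H2) : mul2 q (flip2 u) R = mul2 q R u -> conjR u = flip2 u.
Proof. by move=> uR; rewrite /conjR -uR -mul2A R_mulRinv mul2_1r. Qed.

Lemma flip2_Deltab b : flip2 (Deltab q a b) = conjR (Deltab q a b).
Proof.
rewrite /Deltab flip2_mul !flip2_pow2 conjR_mul !conjR_pow2.
by rewrite (conjR_flip flip_Dz_R) (conjR_flip flip_Dx_R).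
Qed.

Lemma flip2_sumZ (c : B -> k) (F : B -> H2) :
  flip2 (\sum_b scl (c b) (F b)) = \sum_b scl (c b) (flip2 (F b)).
Proof.
by apply/ffunP => p; rewrite ffunE !sum_ffunE; apply: eq_bigr => b _; rewrite !ffunE.
Qed.

Lemma Delta_op_conjR h : Delta_op q a h = conjR (Delta q a h).
Proof.
rewrite /Delta_op /Delta /conjR mul2E flip2_sumZ.
rewrite [mul_sc _ _ (\sum_b _)]mul_sc_sumr [mul_sc _ (\sum_b _) _]mul_sc_suml.
by apply: eq_bigr => b _; rewrite flip2_Deltab /conjR mul2E mul_scZr mul_scZl.
Qed.

Lemma zpow_ordE (i : 'I_N) (b : B) : zpow k n i b = (b.1 == i)%:R * (~~ b.2)%:R.
Proof.
rewrite ffunE modn_small // -[b.1 == i]/(b.1 == i :> nat).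
by case: (_ == _ :> nat); case: b.2; rewrite /= ?mulr1 ?mulr0.
Qed.

Lemma E_coord j (b : B) : E n q j b = N%:R^-1 * (~~ b.2)%:R * Q ^+ (b.1 * j).
Proof.
rewrite ffunE sum_ffunE.
under eq_bigr => i _ do rewrite ffunE zpow_ordE eq_sym mulrCA.
by rewrite sum_delta_l; ring.
Qed.

Lemma unity_ratio_eq1 l (j : 'I_N) : (q ^+ l * Q ^+ j == 1) = (j == l %% N :> nat)%N.
Proof.
have qj_neq0 : q ^+ j != 0 by rewrite expf_neq0 // q_neq0.
rewrite -(inj_eq (mulIf qj_neq0)) mul1r -mulrA exprVn (mulVf qj_neq0) mulr1.
by rewrite (eq_prim_root_expr q_prim) (modn_small (ltn_ord j)) eq_sym.
Qed.

Lemma sum_E_pow l (b : B) : \sum_(i < N) (q ^+ l) ^+ i * E n q i b = zpow k n l b.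
Proof.
case: b => j t.
transitivity (N%:R^-1 * (~~ t)%:R * \sum_(i < N) (q ^+ l * Q ^+ j) ^+ i).
  by rewrite mulr_sumr; apply: eq_bigr => i _; rewrite E_coord exprMn exprM /=; ring.
rewrite sum_expr_unity; last first.
  rewrite exprMn -!exprM mulnC exprM (prim_expr_order q_prim).
  by rewrite mulnC exprM QN !expr1n mulr1.
rewrite unity_ratio_eq1 ffunE /=.
have N_inv : N%:R^-1 * N%:R = 1 :> k := mulVf N_neq0.
by case: t; case: (j == _ :> nat);
  rewrite ?mulr0n ?mulr1n /= ?(mul0r, mulr0, mulr1, mul1r).
Qed.

Lemma sum_Ex_pow l (b : B) : \sum_(i < N) (q ^+ l) ^+ i * mulH q (E n q i) (xH k n) b =
  mulH q (zpow k n l) (xH k n) b.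
Proof.
have -> : zpow k n l = \sum_(i < N) scl ((q ^+ l) ^+ i) (E n q i).
  apply/ffunP => b'; rewrite -sum_E_pow sum_ffunE.
  by apply: eq_bigr => i _; rewrite [RHS]ffunE.
rewrite mulHE mul_sc_suml sum_ffunE.
by apply: eq_bigr => i _; rewrite mul_scZl [RHS]ffunE.
Qed.

Lemma sum_E (b : B) : \sum_(i < N) E n q i b = mono mon1 b.
Proof. by rewrite -zpowE -(sum_E_pow 0); apply: eq_bigr => i _; rewrite expr1n mul1r. Qed.

Lemma sum_signed_E (b : B) : \sum_(i < N) (-1) ^+ i * E n q i b = mono mong b.
Proof. by rewrite -mono_zn -zpowE -sum_E_pow qn. Qed.

Lemma sum_Ex (b : B) : \sum_(i < N) mulH q (E n q i) (xH k n) b = mono monx b.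
Proof.
have -> : mono monx = mulH q (zpow k n 0) (xH k n).
  by rewrite zpowE xHE mulH_mono /= addn0 scl1r.
by rewrite -sum_Ex_pow; apply: eq_bigr => i _; rewrite expr1n mul1r.
Qed.

Lemma sum_signed_Ex (b : B) :
  \sum_(i < N) (-1) ^+ i * mulH q (E n q i) (xH k n) b = mono mongx b.
Proof.
have -> : mono mongx = mulH q (zpow k n n) (xH k n).
  by rewrite zpowE xHE mulH_mono /= addn0 scl1r mono_zn.
by rewrite -sum_Ex_pow qn.
Qed.

Lemma sum_tens_coord (F : 'I_N -> 'I_N -> k) (A C : 'I_N -> H) p :
  (\sum_(i < N) \sum_(j < N) scl (F i j) (tens (A i) (C j))) p =
  \sum_(i < N) \sum_(j < N) F i j * (A i p.1 * C j p.2).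
Proof.
rewrite sum_ffunE; apply: eq_bigr => i _; rewrite sum_ffunE.
by apply: eq_bigr => j _; rewrite !ffunE.
Qed.

Lemma Rmat_comb : Rmat n q a = R.
Proof.
apply/ffunP => p; rewrite [LHS]ffunE [scl _ _ p]ffunE !sum_tens_coord.
rewrite (sum_sign_split two_neq0) (sum_sign_split_shift two_neq0).
rewrite !sum_E !sum_signed_E !sum_Ex !sum_signed_Ex.
by coord_field.
Qed.

Definition leg12 (i : k * (mon * mon)) : k * (mon * mon * mon) :=
  (i.1, (i.2.1, i.2.2, mon1)).

Definition leg13 (i : k * (mon * mon)) : k * (mon * mon * mon) :=
  (i.1, (i.2.1, mon1, i.2.2)).

Definition leg23 (i : k * (mon * mon)) : k * (mon * mon * mon) :=
  (i.1, (mon1, i.2.1, i.2.2)).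

Lemma R12_comb L : R12 (comb2 L) = comb3 (map leg12 L).
Proof.
apply/ffunP => p; rewrite ffunE comb2E comb3E big_map mulr_suml.
by apply: eq_bigr => i _; rewrite oneHE /=; ring.
Qed.

Lemma R13_comb L : R13 (comb2 L) = comb3 (map leg13 L).
Proof.
apply/ffunP => p; rewrite ffunE comb2E comb3E big_map mulr_suml.
by apply: eq_bigr => i _; rewrite oneHE /=; ring.
Qed.

Lemma R23_comb L : R23 (comb2 L) = comb3 (map leg23 L).
Proof.
apply/ffunP => p; rewrite ffunE comb2E comb3E big_map mulr_sumr.
by apply: eq_bigr => i _; rewrite oneHE /=; ring.
Qed.

Lemma sum_comb2 L (G : B * B -> k) :
  \sum_p comb2 L p * G p = \sum_(i <- L) i.1 * G (idx i.2.1, idx i.2.2).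
Proof.
under eq_bigr => p _ do rewrite comb2E mulr_suml.
rewrite exchange_big; apply: eq_bigr => i _.
rewrite -(sum_delta_l (idx i.2.1, idx i.2.2) (fun p => i.1 * G p)).
apply: eq_bigr => -[b1 b2] _; rewrite /mono !ffunE xpair_eqE /=.
by case: (b1 == idx i.2.1); case: (b2 == idx i.2.2); rewrite /=; ring.
Qed.

Lemma DeltaId_comb2E L p : DeltaId q a (comb2 L) p =
  \sum_(i <- L) i.1 * (Deltab q a (idx i.2.1) p.1 * mono i.2.2 p.2).
Proof.
rewrite /DeltaId sum_ffunE; under eq_bigr => p' _ do rewrite ffunE.
by rewrite sum_comb2; apply: eq_bigr => i _; rewrite ffunE.
Qed.

Lemma IdDelta_comb2E L p : IdDelta q a (comb2 L) p =
  \sum_(i <- L) i.1 * (mono i.2.1 p.1.1 * Deltab q a (idx i.2.2) (p.1.2, p.2)).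
Proof.
rewrite /IdDelta sum_ffunE; under eq_bigr => p' _ do rewrite ffunE.
by rewrite sum_comb2; apply: eq_bigr => i _; rewrite ffunE.
Qed.

Lemma DeltaId_Rmat :
  DeltaId q a (Rmat n q a) = mul3 q (R13 (Rmat n q a)) (R23 (Rmat n q a)).
Proof.
rewrite Rmat_comb; apply/ffunP => p; rewrite DeltaId_comb2E R13_comb R23_comb mul3_comb.
by rewrite {1}/R_list !big_cons big_nil !Deltab_idx; coord_field.
Qed.

Lemma IdDelta_Rmat :
  IdDelta q a (Rmat n q a) = mul3 q (R13 (Rmat n q a)) (R12 (Rmat n q a)).
Proof.
rewrite Rmat_comb; apply/ffunP => p; rewrite IdDelta_comb2E R13_comb R12_comb mul3_comb.
by rewrite {1}/R_list !big_cons big_nil !Deltab_idx; coord_field.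
Qed.

Lemma Rmat_conj_Delta : exists Rinv : H2,
  mul2 q (Rmat n q a) Rinv = one2 k n /\ mul2 q Rinv (Rmat n q a) = one2 k n /\
  forall h, Delta_op q a h = mul2 q (mul2 q (Rmat n q a) (Delta q a h)) Rinv.
Proof.
rewrite Rmat_comb; exists Rinv.
by split; [exact: R_mulRinv | split; [exact: Rinv_mulR | exact: Delta_op_conjR]].
Qed.

End H4n.

Theorem mainTheorem3 (k : closedFieldType) (n : nat) (q a : k) :
  [pchar k] =i pred0 -> (0 < n)%N -> (2 * n).-primitive_root q ->
  @quasi_triangular k n q a (@Rmat k n q a).
Proof.
move=> char_k0 n_gt0 q_prim; split; last split.
- exact: Rmat_conj_Delta.
- exact: DeltaId_Rmat.
- exact: IdDelta_Rmat.
Qed.
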